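(* Let $S$ be an $E$-unitary inverse semigroup, $A$ a semilattice of groups, and $\Lambda=(\alpha,\lambda,f)$, $\Lambda'=(\alpha',\lambda',f')$ Sieben twisted $S$-module structures on $A$. If $\Lambda$ is equivalent to $\Lambda'$, then the corresponding twisted partial actions $\Theta=\Theta^\Lambda$ and $\Theta'=\Theta^{\Lambda'}$ of $\mathcal G(S)$ on $A$ are equivalent.
   Context: A semilattice of groups is an inverse semigroup $A$ with central idempotents; $A_e=\{a: aa^{-1}=a^{-1}a=e\}$. $\mathcal G(S)=S/\sigma$, $\sigma$ the minimum group congruence; $E$-unitary: $e\le s$, $e\in E(S)$ imply $s\in E(S)$. A twisted $S$-module structure $(\alpha,\lambda,f)$: $\alpha:E(S)\to E(A)$ isomorphism, $\lambda_s$ relatively invertible endomorphisms of $A$ (there are $\bar\varphi$, $e_\varphi\in E(A)$ with $\bar\varphi\varphi(a)=e_\varphi a$, $\varphi\bar\varphi(a)=\varphi(e_\varphi)a$, $e_\varphi$ identity of $\bar\varphi(A)$, $\varphi(e_\varphi)$ identity of $\varphi(A)$), $f(s,t)\in A_{\alpha(stt^{-1}s^{-1})}$, with (i) $\lambda_e(a)=\alpha(e)a$; (ii) $\lambda_s(\alpha(e))=\alpha(ses^{-1})$; (iii) $\lambda_s\lambda_t(a)=f(s,t)\lambda_{st}(a)f(s,t)^{-1}$; (iv) $f(se,e)=\alpha(ses^{-1})$, $f(e,es)=\alpha(ess^{-1})$; (v) $\lambda_s(f(t,u))f(s,tu)=f(s,t)f(st,u)$; Sieben: also $f(s,e)=\alpha(ses^{-1})$,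 $f(e,s)=\alpha(ess^{-1})$. Equivalence of structures: $\alpha'=\alpha$ and there is $g:S\to A$, $g(s)\in A_{\alpha(ss^{-1})}$, with $\lambda'_s(a)=g(s)\lambda_s(a)g(s)^{-1}$ and $f'(s,t)g(st)=g(s)\lambda_s(g(t))f(s,t)$. $\Theta^\Lambda=(\theta,w)$: for $x\in\mathcal G(S)$, $D_x=\bigsqcup_{s\in x}A_{\alpha(ss^{-1})}$; $\theta_x(a)=\lambda_s(a)$ for $a\in D_{x^{-1}}$ with $s\in x$ the unique element with $\alpha(s^{-1}s)=aa^{-1}$; $w_{x,y}a=f(s,s^{-1}t)a$, $aw_{x,y}=af(s,s^{-1}t)$ for $a\in D_xD_{xy}$ with $s\in x$, $t\in xy$ unique such that $\alpha(ss^{-1})=\alpha(tt^{-1})=aa^{-1}$; this is a twisted partial action. Multipliers of a semigroup $T$: pairs $(L,R)$ of maps with $L(st)=L(s)t$, $R(st)=sR(t)$, $sL(t)=R(s)t$, written $ws$, $sw$; monoid $\mathcal M(T)$ with unit group $\mathcal U(\mathcal M(T))$. Two twisted partial actions $(\theta,w)$, $(\theta',w')$ of a group on $A$ (with domains $D_x$, $D'_x$) are equivalent if $D'_x=D_x$ and there exist $\varepsilon_x\in\mathcal U(\mathcal M(D_x))$ with $\theta'_x(s)=\varepsilon_x\theta_x(s)\varepsilon_x^{-1}$ for $s\in D_{x^{-1}}$ and $\theta'_x(s)w'_{x,y}\varepsilon_{xy}=\varepsilon_x\theta_x(s\varepsilon_y)w_{x,y}$ for $s\in D_{x^{-1}}D_y$.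 *)

Record InvSemigroup := {
  isg_car :> Type;
  isg_mul : isg_car -> isg_car -> isg_car;
  isg_inv : isg_car -> isg_car;
  isg_assoc : forall a b c, isg_mul a (isg_mul b c) = isg_mul (isg_mul a b) c;
  isg_regular : forall a, isg_mul (isg_mul a (isg_inv a)) a = a;
  isg_regular' : forall a, isg_mul (isg_mul (isg_inv a) a) (isg_inv a) = isg_inv a;
  isg_idem_comm : forall e f, isg_mul e e = e -> isg_mul f f = f ->
                  isg_mul e f = isg_mul f e }.

Arguments isg_mul {_} _ _.
Arguments isg_inv {_} _.

Declare Scope isg_scope.
Infix "**" := isg_mul (at level 40, left associativity) : isg_scope.
Notation "x ^-1" := (isg_inv x) (at level 3, left associativity, format "x ^-1") : isg_scope.
Open Scope isg_scope.

Section InvSemigroupDefs.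
Context {S : InvSemigroup}.

Definition is_idem (e : S) : Prop := e ** e = e.

Definition nat_le (a b : S) : Prop := exists e, is_idem e /\ a = e ** b.

Definition in_Ae (e a : S) : Prop := a ** a^-1 = e /\ a^-1 ** a = e.

Definition is_endo (phi : S -> S) : Prop := forall a b, phi (a ** b) = phi a ** phi b.

Definition identity_of (P : S -> Prop) (e : S) : Prop :=
  P e /\ forall b, P b -> e ** b = b /\ b ** e = b.

Definition rel_invertible (phi : S -> S) : Prop :=
  exists (phibar : S -> S) (ephi : S),
    is_endo phibar /\ is_idem ephi /\
    (forall a, phibar (phi a) = ephi ** a) /\
    (forall a, phi (phibar a) = phi ephi ** a) /\
    identity_of (fun b => exists a, b = phibar a) ephi /\
    identity_of (fun b => exists a, b = phi a) (phi ephi).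

Definition congruence (rho : S -> S -> Prop) : Prop :=
  (forall s, rho s s) /\ (forall s t, rho s t -> rho t s) /\
  (forall s t u, rho s t -> rho t u -> rho s u) /\
  (forall s t u, rho s t -> rho (u ** s) (u ** t) /\ rho (s ** u) (t ** u)).

Definition group_congruence (rho : S -> S -> Prop) : Prop :=
  congruence rho /\
  exists u, (forall s, rho (u ** s) s /\ rho (s ** u) s) /\
            (forall s, exists t, rho (s ** t) u /\ rho (t ** s) u).

Definition sigma (s t : S) : Prop :=
  forall rho, group_congruence rho -> rho s t.

End InvSemigroupDefs.

Definition E_unitary (S : InvSemigroup) : Prop :=
  forall e s : S, is_idem e -> nat_le e s -> is_idem s.

Definition semilattice_of_groups (A : InvSemigroup) : Prop :=
  forall e a : A, is_idem e -> e ** a = a ** e.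

Record Group := {
  grp_car :> Type;
  gmul : grp_car -> grp_car -> grp_car;
  ginv : grp_car -> grp_car;
  gone : grp_car;
  gassoc : forall x y z, gmul x (gmul y z) = gmul (gmul x y) z;
  gone_l : forall x, gmul gone x = x;
  ginv_l : forall x, gmul (ginv x) x = gone }.

Arguments gmul {_} _ _.
Arguments ginv {_} _.
Arguments gone {_}.

(** (G, q) presents G(S) = S/sigma: q is a surjective homomorphism whose
    kernel relation is exactly the minimum group congruence sigma. *)
Definition max_group_image (S : InvSemigroup) (G : Group) (q : S -> G) : Prop :=
  (forall s t, q (s ** t) = gmul (q s) (q t)) /\
  (forall x, exists s, q s = x) /\
  (forall s t, q s = q t <-> sigma s t).

Section TwistedModules.
Context {S A : InvSemigroup}.

(** alpha : E(S) -> E(A) is an isomorphism (alpha is a map S -> A, only its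
    restriction to E(S) matters). *)
Definition iso_E (alpha : S -> A) : Prop :=
  (forall e, is_idem e -> is_idem (alpha e)) /\
  (forall e f, is_idem e -> is_idem f -> alpha (e ** f) = alpha e ** alpha f) /\
  (forall e f, is_idem e -> is_idem f -> alpha e = alpha f -> e = f) /\
  (forall g, is_idem g -> exists e, is_idem e /\ alpha e = g).

Definition sieben_twisted_module (alpha : S -> A) (lam : S -> A -> A)
    (f : S -> S -> A) : Prop :=
  iso_E alpha /\
  (forall s, is_endo (lam s) /\ rel_invertible (lam s)) /\
  (forall s t, in_Ae (alpha (s ** t ** t^-1 ** s^-1)) (f s t)) /\
  (forall e a, is_idem e -> lam e a = alpha e ** a) /\
  (forall s e, is_idem e -> lam s (alpha e) = alpha (s ** e ** s^-1)) /\
  (forall s t a, lam s (lam t a) = f s t ** lam (s ** t) a ** (f s t)^-1) /\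
  (forall s e, is_idem e -> f (s ** e) e = alpha (s ** e ** s^-1)) /\
  (forall s e, is_idem e -> f e (e ** s) = alpha (e ** s ** s^-1)) /\
  (forall s t u, lam s (f t u) ** f s (t ** u) = f s t ** f (s ** t) u) /\
  (* Sieben's extra conditions *)
  (forall s e, is_idem e -> f s e = alpha (s ** e ** s^-1)) /\
  (forall s e, is_idem e -> f e s = alpha (e ** s ** s^-1)).

Definition equiv_twisted_modules (alpha : S -> A) (lam : S -> A -> A)
    (f : S -> S -> A) (alpha' : S -> A) (lam' : S -> A -> A)
    (f' : S -> S -> A) : Prop :=
  (forall e, is_idem e -> alpha' e = alpha e) /\
  exists g : S -> A,
    (forall s, in_Ae (alpha (s ** s^-1)) (g s)) /\
    (forall s a, lam' s a = g s ** lam s a ** (g s)^-1) /\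
    (forall s t, f' s t ** g (s ** t) = g s ** lam s (g t) ** f s t).

Definition Ddom {G : Group} (alpha : S -> A) (q : S -> G) (x : G) (a : A) : Prop :=
  exists s, q s = x /\ in_Ae (alpha (s ** s^-1)) a.

Definition prod_dom {G : Group} (D : G -> A -> Prop) (x y : G) (a : A) : Prop :=
  exists b c, D x b /\ D y c /\ a = b ** c.

(** (theta, w) is the twisted partial action Theta^Lambda of G(S) on A;
    the multiplier w_{x,y} is given by its left/right actions wL x y, wR x y. *)
Definition Theta_of {G : Group} (alpha : S -> A) (lam : S -> A -> A)
    (f : S -> S -> A) (q : S -> G) (theta : G -> A -> A)
    (wL wR : G -> G -> A -> A) : Prop :=
  (forall x a s, Ddom alpha q (ginv x) a -> q s = x ->
     alpha (s^-1 ** s) = a ** a^-1 -> theta x a = lam s a) /\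
  (forall x y a s t, prod_dom (Ddom alpha q) x (gmul x y) a ->
     q s = x -> q t = gmul x y ->
     alpha (s ** s^-1) = a ** a^-1 -> alpha (t ** t^-1) = a ** a^-1 ->
     wL x y a = f s (s^-1 ** t) ** a /\ wR x y a = a ** f s (s^-1 ** t)).

Definition is_multiplier (T : A -> Prop) (L R : A -> A) : Prop :=
  (forall a, T a -> T (L a) /\ T (R a)) /\
  (forall a b, T a -> T b ->
     L (a ** b) = L a ** b /\ R (a ** b) = a ** R b /\ a ** L b = R a ** b).

(** equivalence of twisted partial actions; the unit multiplier eps_x of
    M(D_x) is (eL x, eR x), with inverse (eLi x, eRi x). *)
Definition equiv_TPA {G : Group} (D D' : G -> A -> Prop)
    (theta : G -> A -> A) (wL wR : G -> G -> A -> A)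
    (theta' : G -> A -> A) (wL' wR' : G -> G -> A -> A) : Prop :=
  (forall x a, D' x a <-> D x a) /\
  exists eL eR eLi eRi : G -> A -> A,
    (forall x, is_multiplier (D x) (eL x) (eR x) /\
               is_multiplier (D x) (eLi x) (eRi x) /\
               (forall a, D x a ->
                  eL x (eLi x a) = a /\ eLi x (eL x a) = a /\
                  eR x (eRi x a) = a /\ eRi x (eR x a) = a)) /\
    (forall x a, D (ginv x) a -> theta' x a = eL x (eRi x (theta x a))) /\
    (forall x y a, prod_dom D (ginv x) y a ->
       eR (gmul x y) (wR' x y (theta' x a)) =
       eL x (wR x y (theta x (eR y a)))).

End TwistedModules.

(* Since S is E-unitary, an element s of a sigma-class x is determined by its range
   idempotent ss^-1. Hence D_x is the disjoint union of the groups A_{alpha(ss^-1)}, s in x,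
   and the map g : S -> A of the equivalence of modules defines eps_x by multiplying the
   component A_{alpha(ss^-1)} by g(s). Sieben's normalisation of f and f' forces
   g(es) = alpha(e) g(s) for idempotent e, which is what makes eps_x a multiplier of D_x.
   An element of D_{x^-1} D_y lies in A_{alpha(s^-1 s)} for some s in x and some w in y with
   ww^-1 = s^-1 s; using lambda' = g lambda g^-1 and f'(s,w) g(sw) = g(s) lambda_s(g w) f(s,w),
   both sides of the compatibility condition for w, w' become g(s) lambda_s(a g(w)) f(s,w). *)

From Stdlib Require Import ClassicalEpsilon.

Arguments isg_assoc {_} _ _ _.
Arguments isg_regular {_} _.
Arguments isg_regular' {_} _.
Arguments isg_idem_comm {_} _ _.
Arguments gassoc {_} _ _ _.
Arguments gone_l {_} _.
Arguments ginv_l {_} _.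

Ltac reassoc := repeat rewrite isg_assoc; reflexivity.

Section InverseSemigroup.
Context {T : InvSemigroup}.
Implicit Types a b e f s w : T.

Lemma idem_l a : is_idem (a ** a^-1).
Proof.
  unfold is_idem. replace (a ** a^-1 ** (a ** a^-1)) with (a ** a^-1 ** a ** a^-1) by reassoc.
  now rewrite isg_regular.
Qed.

Lemma idem_r a : is_idem (a^-1 ** a).
Proof.
  unfold is_idem. replace (a^-1 ** a ** (a^-1 ** a)) with (a^-1 ** a ** a^-1 ** a) by reassoc.
  now rewrite isg_regular'.
Qed.

Lemma idem_absorb e f : is_idem e -> is_idem f -> e ** f ** e = e ** f /\ e ** f ** f = e ** f.
Proof.
  intros He Hf. split.
  - rewrite <- isg_assoc, <- (isg_idem_comm e f He Hf), isg_assoc, He. reflexivity.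
  - rewrite <- isg_assoc, Hf. reflexivity.
Qed.

Lemma idem_mul e f : is_idem e -> is_idem f -> is_idem (e ** f).
Proof.
  intros He Hf. unfold is_idem. rewrite isg_assoc.
  now rewrite (proj1 (idem_absorb e f He Hf)), (proj2 (idem_absorb e f He Hf)).
Qed.

Lemma inv_unique a b : a ** b ** a = a -> b ** a ** b = b -> b = a^-1.
Proof.
  intros Haba Hbab.
  assert (Iba : is_idem (b ** a)).
  { unfold is_idem. replace (b ** a ** (b ** a)) with (b ** a ** b ** a) by reassoc.
    now rewrite Hbab. }
  assert (Iab : is_idem (a ** b)).
  { unfold is_idem. replace (a ** b ** (a ** b)) with (a ** b ** a ** b) by reassoc.
    now rewrite Haba. }
  transitivity (a^-1 ** a ** b).
  - transitivity (b ** a ** (a^-1 ** a) ** b).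
    + replace (b ** a ** (a^-1 ** a) ** b) with (b ** (a ** a^-1 ** a) ** b) by reassoc.
      now rewrite isg_regular, Hbab.
    + rewrite (isg_idem_comm _ _ Iba (idem_r a)).
      replace (a^-1 ** a ** (b ** a) ** b) with (a^-1 ** a ** (b ** a ** b)) by reassoc.
      now rewrite Hbab.
  - transitivity (a^-1 ** ((a ** b) ** (a ** a^-1))).
    + rewrite (isg_idem_comm _ _ Iab (idem_l a)).
      replace (a^-1 ** (a ** a^-1 ** (a ** b))) with (a^-1 ** a ** a^-1 ** a ** b) by reassoc.
      now rewrite isg_regular'.
    + replace (a^-1 ** ((a ** b) ** (a ** a^-1))) with (a^-1 ** (a ** b ** a) ** a^-1) by reassoc.
      rewrite Haba. apply isg_regular'.
Qed.

Lemma inv_inv a : (a^-1)^-1 = a.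
Proof. symmetry. apply inv_unique; [apply isg_regular' | apply isg_regular]. Qed.

Lemma idem_inv e : is_idem e -> e^-1 = e.
Proof. intros He. symmetry. apply inv_unique; unfold is_idem in He; now rewrite !He. Qed.

Lemma inv_mul a b : (a ** b)^-1 = b^-1 ** a^-1.
Proof.
  symmetry. apply inv_unique.
  - replace (a ** b ** (b^-1 ** a^-1) ** (a ** b))
      with (a ** ((b ** b^-1) ** (a^-1 ** a)) ** b) by reassoc.
    rewrite (isg_idem_comm _ _ (idem_l b) (idem_r a)).
    replace (a ** (a^-1 ** a ** (b ** b^-1)) ** b)
      with ((a ** a^-1 ** a) ** (b ** b^-1 ** b)) by reassoc.
    now rewrite !isg_regular.
  - replace (b^-1 ** a^-1 ** (a ** b) ** (b^-1 ** a^-1))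
      with (b^-1 ** ((a^-1 ** a) ** (b ** b^-1)) ** a^-1) by reassoc.
    rewrite (isg_idem_comm _ _ (idem_r a) (idem_l b)).
    replace (b^-1 ** (b ** b^-1 ** (a^-1 ** a)) ** a^-1)
      with ((b^-1 ** b ** b^-1) ** (a^-1 ** a ** a^-1)) by reassoc.
    now rewrite !isg_regular'.
Qed.

Lemma endo_inv (phi : T -> T) a : is_endo phi -> phi (a^-1) = (phi a)^-1.
Proof.
  intros Hphi. apply inv_unique; rewrite <- !Hphi;
    [now rewrite isg_regular | now rewrite isg_regular'].
Qed.

Lemma idem_conj s e : is_idem e -> is_idem (s ** e ** s^-1).
Proof.
  intros He. unfold is_idem.
  replace (s ** e ** s^-1 ** (s ** e ** s^-1)) with (s ** (e ** (s^-1 ** s)) ** e ** s^-1) by reassoc.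
  rewrite (isg_idem_comm _ _ He (idem_r s)).
  replace (s ** (s^-1 ** s ** e) ** e ** s^-1) with ((s ** s^-1 ** s) ** (e ** e) ** s^-1) by reassoc.
  now rewrite isg_regular, He.
Qed.

Lemma conj_mul_idem s e a : is_idem e -> s ** e ** s^-1 ** (s ** a) = s ** (e ** a).
Proof.
  intros He.
  replace (s ** e ** s^-1 ** (s ** a)) with (s ** (e ** (s^-1 ** s)) ** a) by reassoc.
  rewrite (isg_idem_comm _ _ He (idem_r s)).
  replace (s ** (s^-1 ** s ** e) ** a) with ((s ** s^-1 ** s) ** e ** a) by reassoc.
  rewrite isg_regular. reassoc.
Qed.

Lemma range_idem_mul e s : is_idem e -> (e ** s) ** (e ** s)^-1 = e ** (s ** s^-1).
Proof.
  intros He. rewrite inv_mul, (idem_inv e He).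
  replace (e ** s ** (s^-1 ** e)) with (e ** (s ** s^-1) ** e) by reassoc.
  exact (proj1 (idem_absorb e _ He (idem_l s))).
Qed.

Lemma mul_range_dom s w : w ** w^-1 = s^-1 ** s ->
  s^-1 ** (s ** w) = w /\ (s ** w) ** (s ** w)^-1 = s ** s^-1.
Proof.
  intros Hw. split.
  - rewrite isg_assoc, <- Hw. apply isg_regular.
  - rewrite inv_mul. replace (s ** w ** (w^-1 ** s^-1)) with (s ** (w ** w^-1) ** s^-1) by reassoc.
    rewrite Hw. replace (s ** (s^-1 ** s) ** s^-1) with (s ** s^-1 ** s ** s^-1) by reassoc.
    now rewrite isg_regular.
Qed.

End InverseSemigroup.

Section GroupFacts.
Context {G : Group}.
Implicit Types x y : G.

Lemma gidem x : gmul x x = x -> x = gone.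
Proof. intros H. rewrite <- (gone_l x) at 1. now rewrite <- (ginv_l x), <- gassoc, H. Qed.

Lemma ginv_r x : gmul x (ginv x) = gone.
Proof. apply gidem. now rewrite <- gassoc, (gassoc (ginv x)), ginv_l, gone_l. Qed.

Lemma gone_r x : gmul x gone = x.
Proof. now rewrite <- (ginv_l x), gassoc, ginv_r, gone_l. Qed.

Lemma ginv_unique x y : gmul x y = gone -> y = ginv x.
Proof. intros H. now rewrite <- (gone_l y), <- (ginv_l x), <- gassoc, H, gone_r. Qed.

Lemma ginv_inv x : ginv (ginv x) = x.
Proof. symmetry. apply ginv_unique, ginv_l. Qed.

End GroupFacts.

Section EUnitary.
Context {S : InvSemigroup}.
Implicit Types e f s t u : S.

(* This is the minimum group congruence; we only need that it is a group congruence. *)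
Definition idem_related s t := exists e, is_idem e /\ e ** s = e ** t.

Lemma idem_related_congruence : congruence idem_related.
Proof.
  split; [|split; [|split]].
  - intros s. exists (s ** s^-1). split; [apply idem_l | reflexivity].
  - intros s t [e [He H]]. now exists e.
  - intros s t u [e [He Hst]] [f [Hf Htu]]. exists (f ** e). split; [now apply idem_mul|].
    rewrite <- !isg_assoc, Hst, !isg_assoc, (isg_idem_comm f e Hf He), <- !isg_assoc, Htu.
    now rewrite !isg_assoc, (isg_idem_comm e f He Hf).
  - intros s t u [e [He H]]. split.
    + exists (u ** e ** u^-1). split; [now apply idem_conj|].
      now rewrite !conj_mul_idem, H.
    + exists e. split; [exact He|]. now rewrite !isg_assoc, H.
Qed.

Lemma idem_related_group_congruence s0 : group_congruence idem_related.
Proof.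
  split; [exact idem_related_congruence|].
  pose proof (idem_l s0) as I0.
  exists (s0 ** s0^-1). split.
  - intros w. split.
    + exists (s0 ** s0^-1). split; [exact I0|]. now rewrite isg_assoc, I0.
    + exists (w ** (s0 ** s0^-1) ** w^-1). split; [now apply idem_conj|].
      assert (K : w ** (s0 ** s0^-1) ** w^-1 ** w = w ** (s0 ** s0^-1)).
      { replace (w ** (s0 ** s0^-1) ** w^-1 ** w) with (w ** ((s0 ** s0^-1) ** (w^-1 ** w))) by reassoc.
        rewrite (isg_idem_comm _ _ I0 (idem_r w)). rewrite !isg_assoc, isg_regular. reflexivity. }
      now rewrite K, isg_assoc, K, <- isg_assoc, I0.
  - intros w. exists (w^-1). split.
    + exists (w ** w^-1 ** (s0 ** s0^-1)). split; [apply idem_mul; [apply idem_l | exact I0]|].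
      now rewrite (proj1 (idem_absorb _ _ (idem_l w) I0)), (proj2 (idem_absorb _ _ (idem_l w) I0)).
    + exists (w^-1 ** w ** (s0 ** s0^-1)). split; [apply idem_mul; [apply idem_r | exact I0]|].
      now rewrite (proj1 (idem_absorb _ _ (idem_r w) I0)), (proj2 (idem_absorb _ _ (idem_r w) I0)).
Qed.

Lemma sigma_idem_related s t : sigma s t -> idem_related s t.
Proof. intros H. apply H, (idem_related_group_congruence s). Qed.

Lemma E_unitary_idem_quotient e s t : E_unitary S ->
  is_idem e -> e ** s = e ** t -> is_idem (s^-1 ** t).
Proof.
  intros HE He H.
  assert (Ic : is_idem (s^-1 ** e ** s)).
  { pose proof (idem_conj (s^-1) e He) as K. now rewrite inv_inv in K. }
  apply (HE (s^-1 ** e ** s)); [exact Ic|].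
  exists (s^-1 ** e ** s). split; [exact Ic|].
  replace (s^-1 ** e ** s ** (s^-1 ** t)) with (s^-1 ** (e ** (s ** s^-1)) ** t) by reassoc.
  rewrite (isg_idem_comm _ _ He (idem_l s)).
  replace (s^-1 ** (s ** s^-1 ** e) ** t) with ((s^-1 ** s ** s^-1) ** (e ** t)) by reassoc.
  rewrite isg_regular', <- H. reassoc.
Qed.

Lemma E_unitary_idem_related_eq s t : E_unitary S ->
  idem_related s t -> s ** s^-1 = t ** t^-1 -> s = t.
Proof.
  intros HE [e [He H]] Hst.
  assert (Ist := E_unitary_idem_quotient e s t HE He H).
  assert (Its := E_unitary_idem_quotient e t s HE He (eq_sym H)).
  assert (Hs : s ** (s^-1 ** t) = t) by now rewrite isg_assoc, Hst, isg_regular.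
  assert (Ht : t ** (t^-1 ** s) = s) by now rewrite isg_assoc, <- Hst, isg_regular.
  assert (Hsff : s ** (s^-1 ** t) ** (t^-1 ** s) = s) by now rewrite Hs, Ht.
  symmetry. rewrite <- Hs. rewrite <- Hsff at 1.
  rewrite <- (isg_assoc (s ** _)), (isg_idem_comm _ _ Its Ist), isg_assoc, <- (isg_assoc s), Ist.
  exact Hsff.
Qed.

End EUnitary.

Section MaxGroupImage.
Context {S : InvSemigroup} {G : Group} (q : S -> G) (Hq : max_group_image S G q).
Implicit Types e s t : S.

Lemma q_mul s t : q (s ** t) = gmul (q s) (q t).
Proof. apply Hq. Qed.

Lemma q_idem e : is_idem e -> q e = gone.
Proof. intros He. apply gidem. now rewrite <- q_mul, He. Qed.

Lemma q_idem_mul e s : is_idem e -> q (e ** s) = q s.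
Proof. intros He. now rewrite q_mul, q_idem, gone_l. Qed.

Lemma q_inv s : q (s^-1) = ginv (q s).
Proof. apply ginv_unique. rewrite <- q_mul. apply q_idem, idem_l. Qed.

Lemma q_eq_range_eq s t : E_unitary S -> q s = q t -> s ** s^-1 = t ** t^-1 -> s = t.
Proof.
  intros HE Hst. apply E_unitary_idem_related_eq; [exact HE|].
  apply sigma_idem_related. now apply Hq.
Qed.

End MaxGroupImage.

Section SemilatticeOfGroups.
Context {A : InvSemigroup} (HA : semilattice_of_groups A).
Implicit Types a b e f : A.

Lemma in_Ae_idem e a : in_Ae e a -> is_idem e.
Proof. intros [H _]. rewrite <- H. apply idem_l. Qed.

Lemma in_Ae_mull e a : in_Ae e a -> e ** a = a.
Proof. intros [H _]. rewrite <- H. apply isg_regular. Qed.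

Lemma in_Ae_mulr e a : in_Ae e a -> a ** e = a.
Proof. intros [_ H]. rewrite <- H, isg_assoc. apply isg_regular. Qed.

Lemma in_Ae_inv e a : in_Ae e a -> in_Ae e a^-1.
Proof. intros [H1 H2]. split; now rewrite inv_inv. Qed.

Lemma in_Ae_self e : is_idem e -> in_Ae e e.
Proof. intros He. unfold in_Ae. now rewrite idem_inv. Qed.

Lemma in_Ae_mul e f a b : in_Ae e a -> in_Ae f b -> in_Ae (e ** f) (a ** b).
Proof.
  intros Ha Hb. pose proof Ha as [Ha1 Ha2]. pose proof Hb as [Hb1 Hb2].
  assert (Ie := in_Ae_idem e a Ha). assert (If := in_Ae_idem f b Hb).
  unfold in_Ae. rewrite inv_mul. split.
  - replace (a ** b ** (b^-1 ** a^-1)) with (a ** (b ** b^-1) ** a^-1) by reassoc.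
    rewrite Hb1, <- (HA _ _ If), <- isg_assoc, Ha1. now apply isg_idem_comm.
  - replace (b^-1 ** a^-1 ** (a ** b)) with (b^-1 ** (a^-1 ** a) ** b) by reassoc.
    rewrite Ha2, <- isg_assoc, (HA _ _ Ie), isg_assoc, Hb2. now apply isg_idem_comm.
Qed.

Lemma in_Ae_mul_same e a b : in_Ae e a -> in_Ae e b -> in_Ae e (a ** b).
Proof.
  intros Ha Hb. pose proof (in_Ae_mul _ _ _ _ Ha Hb) as H.
  now rewrite (in_Ae_idem _ _ Ha) in H.
Qed.

End SemilatticeOfGroups.

Section Multipliers.
Context {S A : InvSemigroup} {G : Group} (q : S -> G) (alpha : S -> A).
Hypothesis HE : E_unitary S.
Hypothesis HA : semilattice_of_groups A.
Hypothesis Hq : max_group_image S G q.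
Hypothesis Hiso : iso_E alpha.
Implicit Types (e s t : S) (a b : A) (x : G).

Lemma alpha_idem e : is_idem e -> is_idem (alpha e).
Proof. apply Hiso. Qed.

Lemma alpha_mul e f : is_idem e -> is_idem f -> alpha (e ** f) = alpha e ** alpha f.
Proof. apply Hiso. Qed.

Definition dom_rep x a s := q s = x /\ in_Ae (alpha (s ** s^-1)) a.

Lemma dom_rep_unique x a s t : dom_rep x a s -> dom_rep x a t -> s = t.
Proof.
  intros [Hs [Hsa _]] [Ht [Hta _]].
  apply (q_eq_range_eq q Hq); [exact HE | congruence |].
  apply Hiso; [apply idem_l | apply idem_l | congruence].
Qed.

Lemma Ddom_inv_rep x a : Ddom alpha q (ginv x) a ->
  exists s, q s = x /\ in_Ae (alpha (s^-1 ** s)) a.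
Proof.
  intros [u [Hu Ha]]. exists (u^-1). split.
  - now rewrite (q_inv q Hq), Hu, ginv_inv.
  - now rewrite inv_inv.
Qed.

Lemma prod_dom_inv_rep x y a : prod_dom (Ddom alpha q) (ginv x) y a ->
  exists s w, q s = x /\ q w = y /\ w ** w^-1 = s^-1 ** s /\ in_Ae (alpha (s^-1 ** s)) a.
Proof.
  intros [b [c [[u [Hu Hb]] [[v [Hv Hc]] ->]]]].
  assert (Iu := idem_l u). assert (Iv := idem_l v).
  assert (Hss : (u^-1 ** (v ** v^-1))^-1 ** (u^-1 ** (v ** v^-1)) = v ** v^-1 ** (u ** u^-1)).
  { rewrite inv_mul, inv_inv, (idem_inv _ Iv).
    replace (v ** v^-1 ** u ** (u^-1 ** (v ** v^-1)))
      with (v ** v^-1 ** (u ** u^-1) ** (v ** v^-1)) by reassoc.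
    apply idem_absorb; assumption. }
  exists (u^-1 ** (v ** v^-1)), ((u^-1 ** (v ** v^-1))^-1 ** (u^-1 ** (v ** v^-1)) ** v).
  rewrite Hss. split; [|split; [|split]].
  - now rewrite (q_mul q Hq), (q_inv q Hq), (q_idem q Hq _ Iv), Hu, gone_r, ginv_inv.
  - rewrite (q_idem_mul q Hq); [exact Hv | now apply idem_mul].
  - rewrite range_idem_mul by now apply idem_mul.
    apply (proj1 (idem_absorb _ _ Iv Iu)).
  - rewrite alpha_mul, (isg_idem_comm _ _ (alpha_idem _ Iv) (alpha_idem _ Iu)) by assumption.
    now apply in_Ae_mul.
Qed.

Lemma dom_rep_mul x a b sa sb : dom_rep x a sa -> dom_rep x b sb ->
  dom_rep x (a ** b) ((sb ** sb^-1) ** sa) /\ dom_rep x (a ** b) ((sa ** sa^-1) ** sb).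
Proof.
  intros [Hqa Ha] [Hqb Hb].
  assert (Hab := in_Ae_mul HA _ _ _ _ Ha Hb).
  split; split; try (rewrite (q_idem_mul q Hq); [assumption | apply idem_l]);
    rewrite range_idem_mul, alpha_mul by apply idem_l.
  - now rewrite (isg_idem_comm _ _ (alpha_idem _ (idem_l sb)) (alpha_idem _ (idem_l sa))).
  - exact Hab.
Qed.

Definition dom_rep_pick x a : option S :=
  match excluded_middle_informative (exists s, dom_rep x a s) with
  | left H => Some (proj1_sig (constructive_indefinite_description _ H))
  | right _ => None
  end.

Lemma dom_rep_pick_eq x a s : dom_rep x a s -> dom_rep_pick x a = Some s.
Proof.
  intros Hs. unfold dom_rep_pick. destruct excluded_middle_informative as [H|H].
  - destruct constructive_indefinite_description as [t Ht]. simpl.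
    now rewrite (dom_rep_unique _ _ _ _ Ht Hs).
  - exfalso. apply H. now exists s.
Qed.

(* (mulL h x, mulR h x) multiplies the component A_{alpha(ss^-1)} of D_x by h(s) on the left,
   resp. right; off D_x it is the identity (a junk value). *)
Definition mulL (h : S -> A) x a : A :=
  match dom_rep_pick x a with Some s => h s ** a | None => a end.

Definition mulR (h : S -> A) x a : A :=
  match dom_rep_pick x a with Some s => a ** h s | None => a end.

Lemma mulL_eq h x a s : dom_rep x a s -> mulL h x a = h s ** a.
Proof. intros Hs. unfold mulL. now rewrite (dom_rep_pick_eq _ _ _ Hs). Qed.

Lemma mulR_eq h x a s : dom_rep x a s -> mulR h x a = a ** h s.
Proof. intros Hs. unfold mulR. now rewrite (dom_rep_pick_eq _ _ _ Hs). Qed.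

Definition gauge (h : S -> A) : Prop :=
  (forall s, in_Ae (alpha (s ** s^-1)) (h s)) /\
  (forall e s, is_idem e -> h (e ** s) = alpha e ** h s).

Lemma gauge_multiplier h x : gauge h -> is_multiplier (Ddom alpha q x) (mulL h x) (mulR h x).
Proof.
  intros [Hin Hidem]. split.
  - intros a [s Hs]. rewrite (mulL_eq _ _ _ _ Hs), (mulR_eq _ _ _ _ Hs).
    destruct Hs as [Hqs Ha]. split; exists s; split; auto using in_Ae_mul_same.
  - intros a b [sa Ha] [sb Hb].
    destruct (dom_rep_mul _ _ _ _ _ Ha Hb) as [Hab Hab'].
    rewrite (mulL_eq _ _ _ _ Hab), (mulR_eq _ _ _ _ Hab'), (mulL_eq _ _ _ _ Ha),
      (mulL_eq _ _ _ _ Hb), (mulR_eq _ _ _ _ Ha), (mulR_eq _ _ _ _ Hb), !Hidem by apply idem_l.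
    assert (Esa := alpha_idem _ (idem_l sa)). assert (Esb := alpha_idem _ (idem_l sb)).
    assert (Hrep := dom_rep_unique _ _ _ _ Hab Hab').
    destruct Ha as [_ Ha]. destruct Hb as [_ Hb].
    split; [|split].
    + rewrite (HA _ _ Esb).
      replace (h sa ** alpha (sb ** sb^-1) ** (a ** b))
        with (h sa ** (alpha (sb ** sb^-1) ** a) ** b) by reassoc.
      rewrite (HA _ _ Esb).
      replace (h sa ** (a ** alpha (sb ** sb^-1)) ** b)
        with (h sa ** a ** (alpha (sb ** sb^-1) ** b)) by reassoc.
      now rewrite (in_Ae_mull _ _ Hb).
    + replace (a ** b ** (alpha (sa ** sa^-1) ** h sb))
        with (a ** (b ** alpha (sa ** sa^-1)) ** h sb) by reassoc.
      rewrite <- (HA _ _ Esa).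
      replace (a ** (alpha (sa ** sa^-1) ** b) ** h sb)
        with (a ** alpha (sa ** sa^-1) ** b ** h sb) by reassoc.
      rewrite (in_Ae_mulr _ _ Ha). reassoc.
    + transitivity (a ** h ((sa ** sa^-1) ** sb) ** b).
      * rewrite Hidem by apply idem_l.
        replace (a ** (alpha (sa ** sa^-1) ** h sb) ** b)
          with (a ** alpha (sa ** sa^-1) ** h sb ** b) by reassoc.
        rewrite (in_Ae_mulr _ _ Ha). reassoc.
      * rewrite <- Hrep, Hidem by apply idem_l. rewrite (HA _ _ Esb).
        replace (a ** (h sa ** alpha (sb ** sb^-1)) ** b)
          with (a ** h sa ** (alpha (sb ** sb^-1) ** b)) by reassoc.
        now rewrite (in_Ae_mull _ _ Hb).
Qed.

Lemma mulL_cancel h k x a : (forall s, in_Ae (alpha (s ** s^-1)) (k s)) ->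
  (forall s, h s ** k s = alpha (s ** s^-1)) ->
  Ddom alpha q x a -> mulL h x (mulL k x a) = a.
Proof.
  intros Hk Hhk [s Hs].
  assert (Hks : dom_rep x (k s ** a) s) by (destruct Hs; split; auto using in_Ae_mul_same).
  rewrite (mulL_eq _ _ _ _ Hs), (mulL_eq _ _ _ _ Hks), isg_assoc, Hhk.
  apply in_Ae_mull, Hs.
Qed.

Lemma mulR_cancel h k x a : (forall s, in_Ae (alpha (s ** s^-1)) (k s)) ->
  (forall s, k s ** h s = alpha (s ** s^-1)) ->
  Ddom alpha q x a -> mulR h x (mulR k x a) = a.
Proof.
  intros Hk Hkh [s Hs].
  assert (Hks : dom_rep x (a ** k s) s) by (destruct Hs; split; auto using in_Ae_mul_same).
  rewrite (mulR_eq _ _ _ _ Hs), (mulR_eq _ _ _ _ Hks), <- isg_assoc, Hkh.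
  apply in_Ae_mulr, Hs.
Qed.

End Multipliers.

Section TwistedModule.
Context {S A : InvSemigroup} (alpha : S -> A) (lam : S -> A -> A) (f : S -> S -> A).
Hypothesis Hmod : sieben_twisted_module alpha lam f.
Implicit Types (s w : S) (a : A).

Lemma lam_in_Ae s a : in_Ae (alpha (s^-1 ** s)) a -> in_Ae (alpha (s ** s^-1)) (lam s a).
Proof.
  destruct Hmod as [_ [Hlam [_ [_ [Hii _]]]]]. destruct (Hlam s) as [Hend _].
  assert (K : s ** (s^-1 ** s) ** s^-1 = s ** s^-1).
  { replace (s ** (s^-1 ** s) ** s^-1) with (s ** s^-1 ** s ** s^-1) by reassoc.
    now rewrite isg_regular. }
  intros [H1 H2]. split;
    rewrite <- (endo_inv _ _ Hend), <- Hend; [rewrite H1 | rewrite H2];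
    rewrite Hii by apply idem_r; now rewrite K.
Qed.

Lemma cocycle_in_Ae s w : w ** w^-1 = s^-1 ** s -> in_Ae (alpha (s ** s^-1)) (f s w).
Proof.
  intros Hw. destruct Hmod as [_ [_ [Hf _]]].
  rewrite <- (proj2 (mul_range_dom s w Hw)), inv_mul.
  replace (s ** w ** (w^-1 ** s^-1)) with (s ** w ** w^-1 ** s^-1) by reassoc.
  apply Hf.
Qed.

End TwistedModule.

Section ModuleEquivalence.
Context {S A : InvSemigroup} (alpha : S -> A) (lam : S -> A -> A) (f : S -> S -> A)
  (alpha' : S -> A) (lam' : S -> A -> A) (f' : S -> S -> A) (g : S -> A).
Hypothesis HA : semilattice_of_groups A.
Hypothesis Hmod : sieben_twisted_module alpha lam f.
Hypothesis Hmod' : sieben_twisted_module alpha' lam' f'.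
Hypothesis Hal : forall e, is_idem e -> alpha' e = alpha e.
Hypothesis Hg : forall s, in_Ae (alpha (s ** s^-1)) (g s).
Hypothesis Hfg : forall s t, f' s t ** g (s ** t) = g s ** lam s (g t) ** f s t.
Implicit Types (e s : S).

Lemma equiv_idem e : is_idem e -> g e = alpha e.
Proof.
  destruct Hmod as [_ [_ [_ [Hi [_ [_ [_ [_ [_ [Hs1 _]]]]]]]]]].
  destruct Hmod' as [_ [_ [_ [_ [_ [_ [_ [_ [_ [Hs1' _]]]]]]]]]].
  intros He. pose proof (Hfg e e) as H.
  pose proof (Hg e) as Hge. rewrite (idem_inv _ He), He in Hge.
  rewrite (Hs1' e e He), (Hs1 e e He), (Hi e _ He), (idem_inv _ He), !He, (Hal _ He),
    (in_Ae_mull _ _ Hge), <- isg_assoc, (in_Ae_mulr _ _ Hge) in H.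
  (* H says g e is idempotent, and the only idempotent of A_{alpha e} is alpha e *)
  destruct Hge as [Hge _]. rewrite <- Hge, (idem_inv _ (eq_sym H)). exact H.
Qed.

Lemma equiv_idem_mul e s : is_idem e -> g (e ** s) = alpha e ** g s.
Proof.
  destruct Hmod as [Hiso [_ [_ [Hi [_ [_ [_ [_ [_ [_ Hs2]]]]]]]]]].
  destruct Hmod' as [_ [_ [_ [_ [_ [_ [_ [_ [_ [_ Hs2']]]]]]]]]].
  intros He. pose proof (Hfg e s) as H.
  assert (IE := alpha_idem alpha Hiso _ He).
  assert (Iess : is_idem (e ** (s ** s^-1))) by (apply idem_mul; auto using idem_l).
  pose proof (Hg (e ** s)) as Hges. rewrite (range_idem_mul _ _ He) in Hges.
  rewrite (Hs2' s e He), (Hs2 s e He), <- !isg_assoc, (Hal _ Iess), (in_Ae_mull _ _ Hges),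
    (equiv_idem e He), (Hi e _ He), (alpha_mul alpha Hiso _ _ He (idem_l s)) in H.
  rewrite H.
  replace (alpha e ** (alpha e ** g s ** (alpha e ** alpha (s ** s^-1))))
    with (alpha e ** alpha e ** (g s ** alpha e) ** alpha (s ** s^-1)) by reassoc.
  rewrite <- (HA _ (g s) IE).
  replace (alpha e ** alpha e ** (alpha e ** g s) ** alpha (s ** s^-1))
    with (alpha e ** alpha e ** alpha e ** (g s ** alpha (s ** s^-1))) by reassoc.
  rewrite (in_Ae_mulr _ _ (Hg s)). now rewrite !IE.
Qed.

Lemma equiv_gauge : gauge alpha g.
Proof. split; [exact Hg | exact equiv_idem_mul]. Qed.

Lemma equiv_inv_gauge : gauge alpha (fun s => (g s)^-1).
Proof.
  destruct Hmod as [Hiso _]. split.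
  - intros s. apply in_Ae_inv, Hg.
  - intros e s He. simpl. rewrite (equiv_idem_mul e s He), inv_mul,
      (idem_inv _ (alpha_idem alpha Hiso _ He)).
    symmetry. apply HA, (alpha_idem alpha Hiso _ He).
Qed.

End ModuleEquivalence.

Section ThetaOfModule.
Context {S A : InvSemigroup} {G : Group} (q : S -> G)
  (alpha : S -> A) (lam : S -> A -> A) (f : S -> S -> A)
  (theta : G -> A -> A) (wL wR : G -> G -> A -> A).
Hypothesis Hq : max_group_image S G q.
Hypothesis Hiso : iso_E alpha.
Hypothesis HTh : Theta_of alpha lam f q theta wL wR.
Implicit Types (s w : S) (a z : A).

Lemma Theta_theta_eq s a : in_Ae (alpha (s^-1 ** s)) a -> theta (q s) a = lam s a.
Proof.
  intros Ha. apply (proj1 HTh); [|reflexivity | exact (eq_sym (proj1 Ha))].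
  exists (s^-1). rewrite inv_inv. split; [apply (q_inv q Hq) | exact Ha].
Qed.

Lemma Theta_wR_eq s w z : w ** w^-1 = s^-1 ** s -> in_Ae (alpha (s ** s^-1)) z ->
  wR (q s) (q w) z = z ** f s w.
Proof.
  intros Hw Hz. destruct (mul_range_dom s w Hw) as [Hsw Hrange].
  assert (Hd : prod_dom (Ddom alpha q) (q s) (gmul (q s) (q w)) z).
  { exists z, (alpha (s ** s^-1)). split; [|split].
    - now exists s.
    - exists (s ** w). rewrite Hrange. split; [apply (q_mul q Hq) |].
      apply in_Ae_self, (alpha_idem alpha Hiso), idem_l.
    - symmetry. apply (in_Ae_mulr _ _ Hz). }
  destruct (proj2 HTh (q s) (q w) z s (s ** w) Hd eq_refl (q_mul q Hq s w)) as [_ HwR].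
  - exact (eq_sym (proj1 Hz)).
  - rewrite Hrange. exact (eq_sym (proj1 Hz)).
  - now rewrite HwR, Hsw.
Qed.

End ThetaOfModule.

Section EquivalentModules.
Context {S A : InvSemigroup} {G : Group} (q : S -> G)
  (alpha : S -> A) (lam : S -> A -> A) (f : S -> S -> A)
  (alpha' : S -> A) (lam' : S -> A -> A) (f' : S -> S -> A) (g : S -> A)
  (theta : G -> A -> A) (wL wR : G -> G -> A -> A)
  (theta' : G -> A -> A) (wL' wR' : G -> G -> A -> A).
Hypothesis HE : E_unitary S.
Hypothesis HA : semilattice_of_groups A.
Hypothesis Hq : max_group_image S G q.
Hypothesis Hmod : sieben_twisted_module alpha lam f.
Hypothesis Hmod' : sieben_twisted_module alpha' lam' f'.
Hypothesis Hal : forall e, is_idem e -> alpha' e = alpha e.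
Hypothesis Hg : forall s, in_Ae (alpha (s ** s^-1)) (g s).
Hypothesis Hlg : forall s a, lam' s a = g s ** lam s a ** (g s)^-1.
Hypothesis Hfg : forall s t, f' s t ** g (s ** t) = g s ** lam s (g t) ** f s t.
Hypothesis HTh : Theta_of alpha lam f q theta wL wR.
Hypothesis HTh' : Theta_of alpha' lam' f' q theta' wL' wR'.
Implicit Types (s w : S) (a : A) (x y : G).

Let Hiso : iso_E alpha := proj1 Hmod.
Let Hiso' : iso_E alpha' := proj1 Hmod'.

Lemma Ddom_equiv x a : Ddom alpha' q x a <-> Ddom alpha q x a.
Proof.
  split; intros [s [Hs Ha]]; exists s; split; try exact Hs;
    [rewrite <- (Hal _ (idem_l s)) | rewrite (Hal _ (idem_l s))]; exact Ha.
Qed.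

Lemma equiv_eps_unit x :
  is_multiplier (Ddom alpha q x) (mulL q alpha g x) (mulR q alpha g x) /\
  is_multiplier (Ddom alpha q x) (mulL q alpha (fun s => (g s)^-1) x)
                                 (mulR q alpha (fun s => (g s)^-1) x) /\
  (forall a, Ddom alpha q x a ->
     mulL q alpha g x (mulL q alpha (fun s => (g s)^-1) x a) = a /\
     mulL q alpha (fun s => (g s)^-1) x (mulL q alpha g x a) = a /\
     mulR q alpha g x (mulR q alpha (fun s => (g s)^-1) x a) = a /\
     mulR q alpha (fun s => (g s)^-1) x (mulR q alpha g x a) = a).
Proof.
  assert (Hgg := equiv_gauge alpha lam f alpha' lam' f' g HA Hmod Hmod' Hal Hg Hfg).
  assert (Hgi := equiv_inv_gauge alpha lam f alpha' lam' f' g HA Hmod Hmod' Hal Hg Hfg).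
  split; [|split]; [now apply gauge_multiplier .. |].
  destruct Hgi as [Hgi _]. intros a Ha. split; [|split; [|split]].
  - apply (mulL_cancel q alpha HE HA Hq Hiso); [exact Hgi | intros s; exact (proj1 (Hg s)) | exact Ha].
  - apply (mulL_cancel q alpha HE HA Hq Hiso); [exact Hg | intros s; exact (proj2 (Hg s)) | exact Ha].
  - apply (mulR_cancel q alpha HE HA Hq Hiso); [exact Hgi | intros s; exact (proj2 (Hg s)) | exact Ha].
  - apply (mulR_cancel q alpha HE HA Hq Hiso); [exact Hg | intros s; exact (proj1 (Hg s)) | exact Ha].
Qed.

Lemma equiv_eps_theta x a : Ddom alpha q (ginv x) a ->
  theta' x a = mulL q alpha g x (mulR q alpha (fun s => (g s)^-1) x (theta x a)).
Proof.
  intros Ha. destruct (Ddom_inv_rep q alpha Hq x a Ha) as [s [<- Hsa]].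
  assert (Hsa' : in_Ae (alpha' (s^-1 ** s)) a) by (rewrite Hal by apply idem_r; exact Hsa).
  assert (Hl := lam_in_Ae alpha lam f Hmod s a Hsa).
  assert (Hr1 : dom_rep q alpha (q s) (lam s a) s) by now split.
  assert (Hr2 : dom_rep q alpha (q s) (lam s a ** (g s)^-1) s).
  { split; [reflexivity|]. apply (in_Ae_mul_same HA); [exact Hl | apply in_Ae_inv, Hg]. }
  rewrite (Theta_theta_eq q alpha lam f theta wL wR Hq HTh s a Hsa),
    (Theta_theta_eq q alpha' lam' f' theta' wL' wR' Hq HTh' s a Hsa'), Hlg,
    (mulR_eq q alpha HE Hq Hiso _ _ _ _ Hr1), (mulL_eq q alpha HE Hq Hiso _ _ _ _ Hr2).
  reassoc.
Qed.

Lemma equiv_eps_w x y a : prod_dom (Ddom alpha q) (ginv x) y a ->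
  mulR q alpha g (gmul x y) (wR' x y (theta' x a)) =
  mulL q alpha g x (wR x y (theta x (mulR q alpha g y a))).
Proof.
  intros Ha.
  destruct (prod_dom_inv_rep q alpha HA Hq Hiso x y a Ha) as [s [w [<- [<- [Hw Hsa]]]]].
  destruct (mul_range_dom s w Hw) as [_ Hrange].
  assert (Hsa' : in_Ae (alpha' (s^-1 ** s)) a) by (rewrite Hal by apply idem_r; exact Hsa).
  assert (Hgs := Hg s).
  assert (Hf := cocycle_in_Ae alpha lam f Hmod s w Hw).
  assert (Hagw : in_Ae (alpha (s^-1 ** s)) (a ** g w)).
  { rewrite <- Hw. apply (in_Ae_mul_same HA); [rewrite Hw; exact Hsa | apply Hg]. }
  assert (Hlgw := lam_in_Ae alpha lam f Hmod s _ Hagw).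
  assert (Hla := lam_in_Ae alpha lam f Hmod s _ Hsa).
  assert (Hconj : in_Ae (alpha' (s ** s^-1)) (g s ** lam s a ** (g s)^-1)).
  { rewrite Hal by apply idem_l.
    apply (in_Ae_mul_same HA); [now apply (in_Ae_mul_same HA) | now apply in_Ae_inv]. }
  assert (Hf' : in_Ae (alpha' (s ** s^-1)) (f' s w)) by exact (cocycle_in_Ae _ _ _ Hmod' s w Hw).
  rewrite (Hal _ (idem_l s)) in Hconj, Hf'.
  rewrite (mulR_eq q alpha HE Hq Hiso g (q w) a w) by (split; [reflexivity | now rewrite Hw]).
  rewrite (Theta_theta_eq q alpha lam f theta wL wR Hq HTh s _ Hagw),
    (Theta_wR_eq q alpha lam f theta wL wR Hq Hiso HTh s w _ Hw Hlgw),
    (mulL_eq q alpha HE Hq Hiso g (q s) _ s)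
    by (split; [reflexivity | now apply (in_Ae_mul_same HA)]).
  rewrite (Theta_theta_eq q alpha' lam' f' theta' wL' wR' Hq HTh' s a Hsa'), Hlg,
    (Theta_wR_eq q alpha' lam' f' theta' wL' wR' Hq Hiso' HTh' s w)
    by (try rewrite Hal by apply idem_l; assumption).
  rewrite <- (q_mul q Hq), (mulR_eq q alpha HE Hq Hiso g (q (s ** w)) _ (s ** w))
    by (split; [reflexivity | rewrite Hrange; now apply (in_Ae_mul_same HA)]).
  replace (g s ** lam s a ** (g s)^-1 ** f' s w ** g (s ** w))
    with (g s ** lam s a ** (g s)^-1 ** (f' s w ** g (s ** w))) by reassoc.
  rewrite Hfg.
  replace (g s ** lam s a ** (g s)^-1 ** (g s ** lam s (g w) ** f s w))
    with (g s ** (lam s a ** ((g s)^-1 ** g s)) ** lam s (g w) ** f s w) by reassoc.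
  rewrite (proj2 Hgs), (in_Ae_mulr _ _ Hla), <- (isg_assoc (g s) (lam s a)),
    <- (proj1 (proj1 (proj2 Hmod) s)).
  reassoc.
Qed.

End EquivalentModules.

Theorem proposition6p13 (S A : InvSemigroup) (G : Group) (q : S -> G)
  (alpha : S -> A) (lam : S -> A -> A) (f : S -> S -> A)
  (alpha' : S -> A) (lam' : S -> A -> A) (f' : S -> S -> A)
  (theta : G -> A -> A) (wL wR : G -> G -> A -> A)
  (theta' : G -> A -> A) (wL' wR' : G -> G -> A -> A) :
  E_unitary S -> semilattice_of_groups A -> max_group_image S G q ->
  sieben_twisted_module alpha lam f ->
  sieben_twisted_module alpha' lam' f' ->
  equiv_twisted_modules alpha lam f alpha' lam' f' ->
  Theta_of alpha lam f q theta wL wR ->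
  Theta_of alpha' lam' f' q theta' wL' wR' ->
  equiv_TPA (Ddom alpha q) (Ddom alpha' q) theta wL wR theta' wL' wR'.
Proof.
  intros HE HA Hq Hmod Hmod' [Hal [g [Hg [Hlg Hfg]]]] HTh HTh'.
  split; [exact (Ddom_equiv q alpha alpha' Hal) |].
  exists (mulL q alpha g), (mulR q alpha g),
    (mulL q alpha (fun s => (g s)^-1)), (mulR q alpha (fun s => (g s)^-1)).
  split; [|split].
  - intros x. now apply (equiv_eps_unit q alpha lam f alpha' lam' f' g).
  - intros x a. now apply (equiv_eps_theta q alpha lam f alpha' lam' f' g theta wL wR theta' wL' wR').
  - intros x y a. now apply (equiv_eps_w q alpha lam f alpha' lam' f' g theta wL wR theta' wL' wR').
Qed.
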